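(* Let $n/2 \leq r\leq n$ and let $(\mathcal{S},\mathcal{T})$ be an $r$-maximal cross-intersecting pair in $\binom{[n]}{\leq r}$. For any integer $\ell\ge 0$ with $\ell \le r$ and $n-\ell \leq r$, \[|\mathcal{S}(n-\ell)|+ |\mathcal{T}(n-\ell)| + |\mathcal{S}(\ell)|+ |\mathcal{T}(\ell)| = 2 \binom{n}{\ell}.\]
   Context: $\binom{[n]}{\le r}$ is the set of subsets of $[n]=\{1,\dots,n\}$ of size at most $r$. A pair $(\mathcal{S},\mathcal{T})$ of non-empty families of non-empty subsets is cross-intersecting if $S\cap T\ne\emptyset$ for all $S\in\mathcal{S},T\in\mathcal{T}$; it is $r$-maximal (in $\binom{[n]}{\le r}$) if whenever $(\mathcal{V},\mathcal{W})$ is a cross-intersecting pair in $\binom{[n]}{\le r}$ with $\mathcal{S}\subseteq\mathcal{V}$, $\mathcal{T}\subseteq\mathcal{W}$, then $(\mathcal{V},\mathcal{W})=(\mathcal{S},\mathcal{T})$. For a family $\mathcal{B}$, $\mathcal{B}(\ell)=\{B\in\mathcal{B}:|B|=\ell\}$. *)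

From mathcomp Require Import all_boot.
Set Implicit Arguments. Unset Strict Implicit. Unset Printing Implicit Defensive.

(* Ground set [n] = {1,...,n} is modelled by 'I_n = {0,...,n-1}. *)
Definition setfam (n : nat) := {set {set 'I_n}}.

Definition in_binom_le (n r : nat) (F : setfam n) : Prop :=
  F != set0 /\ forall A, A \in F -> 0 < #|A| /\ #|A| <= r.

Definition cross_intersecting_le (n r : nat) (S T : setfam n) : Prop :=
  [/\ in_binom_le r S, in_binom_le r T &
      forall A B, A \in S -> B \in T -> A :&: B != set0].

Definition r_maximal (n r : nat) (S T : setfam n) : Prop :=
  cross_intersecting_le r S T /\
  forall V W : setfam n, cross_intersecting_le r V W ->
    S \subset V -> T \subset W -> V = S /\ W = T.

Definition layer (n : nat) (F : setfam n) (l : nat) : setfam n :=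
  [set A in F | #|A| == l].

From mathcomp Require Import all_boot.

(* If A and its complement both have at most r elements, then exactly one of
   A \in S and ~: A \in T holds.  Both cannot hold since S and T cross-intersect.
   If A \notin S, maximality forbids adding A to S, so some B \in T misses A,
   i.e. B \subset ~: A; and maximality also makes T closed upwards among sets
   of size at most r, whence ~: A \in T.  Applying this to (S, T) and (T, S)
   for every l-set A, the four layer sizes add up to 2 per l-set. *)

Set Implicit Arguments. Unset Strict Implicit.

Section MaximalPair.
Variables (n r : nat).
Implicit Types (S T : setfam n) (A B C : {set 'I_n}).

Lemma cross_intersecting_le_sym S T :
  cross_intersecting_le r S T -> cross_intersecting_le r T S.
Proof. by case=> hS hT hST; split=> // A B hA hB; rewrite setIC hST. Qed.

Lemma r_maximal_sym S T : r_maximal r S T -> r_maximal r T S.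
Proof.
case=> ciST maxST; split; first exact: cross_intersecting_le_sym.
move=> V W ciVW sTV sSW.
by have [-> ->] := maxST W V (cross_intersecting_le_sym ciVW) sSW sTV.
Qed.

Lemma r_maximal_upclosed S T B C :
  r_maximal r S T -> B \in T -> B \subset C -> #|C| <= r -> C \in T.
Proof.
case=> -[famS [T_neq0 famT] ciST] maxST TB sBC leCr.
have C_gt0 : 0 < #|C| := leq_trans (famT B TB).1 (subset_leq_card sBC).
have ciSCT : cross_intersecting_le r S (C |: T).
  split=> //.
    split=> [|A]; first by apply/set0Pn; exists C; rewrite setU11.
    by rewrite in_setU1 => /predU1P [-> | /famT].
  move=> A X SA; rewrite in_setU1 => /predU1P [-> | /(ciST A X SA)] //.
  apply: contra (ciST A B SA TB) => /eqP AC0.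
  by rewrite -subset0 -AC0 setIS.
have [_ <-] := maxST S (C |: T) ciSCT (subxx _) (subsetUr _ _).
exact: setU11.
Qed.

Lemma r_maximal_notin_disjoint S T A :
  r_maximal r S T -> #|A| <= r -> A \notin S ->
  exists2 B, B \in T & [disjoint A & B].
Proof.
case=> -[[S_neq0 famS] [T_neq0 famT] ciST] maxST leAr notSA.
have [/eqP -> | A_neq0] := boolP (A == set0).
  by have [B TB] := set0Pn _ T_neq0; exists B; rewrite // -setI_eq0 set0I.
apply/exists_inP; apply: contraNT notSA => /exists_inPn missT.
have ciAST : cross_intersecting_le r (A |: S) T.
  split=> //.
    split=> [|X]; first by apply/set0Pn; exists A; rewrite setU11.
    by rewrite in_setU1 => /predU1P [-> | /famS] //; rewrite card_gt0.
  move=> X B; rewrite in_setU1 => /predU1P [-> /missT | /ciST]; last exact.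
  by rewrite setI_eq0.
have [<- _] := maxST (A |: S) T ciAST (subsetUr _ _) (subxx _).
exact: setU11.
Qed.

Lemma r_maximal_setC S T A :
  r_maximal r S T -> #|A| <= r -> #|~: A| <= r -> (~: A \in T) = (A \notin S).
Proof.
move=> maxST leAr leCAr; have [[_ _ ciST] _] := maxST.
have [SA | notSA] := boolP (A \in S).
  by apply/negbTE/negP => /(ciST A _ SA); rewrite setICr eqxx.
have [B TB disjAB] := r_maximal_notin_disjoint maxST leAr notSA.
apply: r_maximal_upclosed maxST TB _ leCAr.
by rewrite -disjoints_subset disjoint_sym.
Qed.

End MaximalPair.

Lemma card_layer n (F : setfam n) l :
  #|layer F l| = \sum_(A : {set 'I_n} | #|A| == l) (A \in F).
Proof.
rewrite -sum1_card big_mkcond [RHS]big_mkcond /=.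
by apply: eq_bigr => A _; rewrite inE; case: (A \in F); case: (_ == l).
Qed.

Lemma card_layer_setC n (F : setfam n) l : l <= n ->
  #|layer F (n - l)| = \sum_(A : {set 'I_n} | #|A| == l) (~: A \in F).
Proof.
move=> le_ln; rewrite card_layer (reindex_inj (@setC_inj _)) /=.
apply: eq_bigl => A; rewrite cardsCs setCK card_ord eqn_sub2lE //.
by rewrite -[n in _ <= n]card_ord max_card.
Qed.

Theorem lemma5p1 (n r : nat) (S T : setfam n) (l : nat) :
  n <= 2 * r -> r <= n -> r_maximal r S T ->
  l <= r -> n - l <= r ->
  #|layer S (n - l)| + #|layer T (n - l)| + #|layer S l| + #|layer T l|
    = 2 * 'C(n, l).
Proof.
move=> _ le_rn maxST le_lr le_nl_r.
have le_ln : l <= n := leq_trans le_lr le_rn.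
rewrite !card_layer_setC // !card_layer -!big_split /=.
rewrite (eq_bigr (fun _ => 2)) => [|A /eqP cardA].
  by rewrite sum_nat_const -cardsE card_draws card_ord mulnC.
have leAr : #|A| <= r by rewrite cardA.
have leCAr : #|~: A| <= r by rewrite cardsCs setCK card_ord cardA.
rewrite (r_maximal_setC maxST) // (r_maximal_setC (r_maximal_sym maxST)) //.
by case: (A \in S); case: (A \in T).
Qed.
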